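(* Let $A,B:\mathbb{R}^n\rightrightarrows\mathbb{R}^n$ be maximally monotone with $B$ $\beta$-cocoercive for some $\beta>0$, and suppose the solution set $X^\star=\{x:0\in Ax+Bx\}$ is nonempty. Suppose the problem $0\in Ax+Bx$ satisfies restricted strong monotonicity with modulus $\mu_f>0$. Let $\lambda\in(0,2)$, $0<\gamma\le\beta$, assume the DR operator $T$ has a fixed point, and let $w^1\in\mathbb{R}^n$. Then $T$ satisfies the error bound condition on $W=\{w:\operatorname{dist}_{W^\star}(w)\le\operatorname{dist}_{W^\star}(w^1)\}$ with constant $$\mu=\frac{\gamma+\gamma\min(\mu_f\beta,1)+\beta}{\lambda\gamma\min(\mu_f\beta,1)}.$$
   Context: For a maximally monotone operator $M$, $J_M=(I+M)^{-1}$ and $R_M=2J_M-I$. The DR operator is $T=(1-\tfrac{\lambda}{2})I+\tfrac{\lambda}{2}R_{\gamma A}R_{\gamma B}$ and $W^\star$ denotes its set of fixed points; $\operatorname{dist}_{W^\star}$ is the Euclidean distance to $W^\star$. $B$ is $\beta$-cocoercive if $\langle u-v,x-y\rangle\ge\beta\|u-v\|^2$ for all $(x,u),(y,v)$ in the graph of $B$. Restricted strong monotonicity with modulus $\mu_f>0$: for all $x\in\mathbb{R}^n$, all $u\in Ax$, $v\in Bx$, $\langle u+v,x-x^\star\rangle\ge\mu_f\|x-x^\star\|^2$ where $x^\star=\Pi_{X^\star}(x)$ is the Euclidean projection of $x$ onto $X^\star$. Error bound condition: $T$ satisfies it on $W$ with constant $\mu\ge0$ if $\operatorname{dist}_{W^\star}(w)\le\mu\|(I-T)w\|$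 for all $w\in W$. *)

(* R^n is modelled as row vectors 'rV[R]_n
   over an arbitrary R : realType, with the Euclidean inner product. *)
From HB Require Import structures.
From mathcomp Require Import all_boot all_order all_algebra.
From mathcomp Require Import classical_sets boolp reals.
Set Implicit Arguments. Unset Strict Implicit. Unset Printing Implicit Defensive.
Import Order.TTheory GRing.Theory Num.Theory.
Local Open Scope ring_scope.
Local Open Scope classical_set_scope.

Section MonotoneOps.
Variables (R : realType) (n : nat).
Notation V := 'rV[R]_n.

Definition dot (u v : V) : R := \sum_(i < n) u ord0 i * v ord0 i.
Definition enorm (u : V) : R := Num.sqrt (dot u u).

Definition setop := V -> set V.

Definition monotone (M : setop) : Prop :=
  forall x y u v, M x u -> M y v -> 0 <= dot (u - v) (x - y).

Definition maximally_monotone (M : setop) : Prop :=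
  monotone M /\
  forall M' : setop, monotone M' -> (forall x u, M x u -> M' x u) ->
    forall x u, M' x u -> M x u.

Definition cocoercive (beta : R) (B : setop) : Prop :=
  forall x y u v, B x u -> B y v ->
    beta * enorm (u - v) ^+ 2 <= dot (u - v) (x - y).

Definition scale_op (gamma : R) (M : setop) : setop :=
  fun x => [set gamma *: u | u in M x].

(* resolvent J_M = (I + M)^{-1}: J_M x is a point p with x ∈ p + M p
   (unique when M is maximally monotone, by Minty's theorem) *)
Definition resolvent (M : setop) (x : V) : V :=
  xget 0 [set p | M p (x - p)].

Definition reflected (M : setop) (x : V) : V := 2%:R *: resolvent M x - x.

Definition DR_op (A B : setop) (gamma lambda : R) (w : V) : V :=
  (1 - lambda / 2%:R) *: w +
  (lambda / 2%:R) *: reflected (scale_op gamma A) (reflected (scale_op gamma B) w).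

Definition fixed_points (T : V -> V) : set V := [set w | T w = w].

Definition solution_set (A B : setop) : set V :=
  [set x | exists u v, A x u /\ B x v /\ u + v = 0].

Definition dist (S : set V) (w : V) : R := inf [set enorm (w - z) | z in S].

Definition is_proj (S : set V) (x p : V) : Prop :=
  S p /\ forall q, S q -> enorm (x - p) <= enorm (x - q).

Definition restricted_strongly_monotone (A B : setop) (mu_f : R) : Prop :=
  forall x xs u v, is_proj (solution_set A B) x xs -> A x u -> B x v ->
    mu_f * enorm (x - xs) ^+ 2 <= dot (u + v) (x - xs).

Definition error_bound (T : V -> V) (W : set V) (mu : R) : Prop :=
  forall w, W w -> dist (fixed_points T) w <= mu * enorm (w - T w).

End MonotoneOps.

(* Let xB := J_{gamma B} w and xA := J_{gamma A} (2 xB - w), with gamma b = w - xB,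
   b in B xB, and gamma a = 2 xB - w - xA, a in A xA; then w - T w = lambda (xB - xA)
   = lambda gamma (a + b).  Project xA onto the solution set to get xs, with a1 + b1 = 0,
   a1 in A xs, b1 in B xs: the point xs + gamma b1 is a fixed point of T.  Taking any
   b' in B xA, restricted strong monotonicity at xA and cocoercivity of B on the pairs
   (xA, xs) and (xB, xA) give three quadratic inequalities, and a sum-of-squares
   combination of them bounds the distance from w to that fixed point by a multiple of
   |a + b|.  The resolvents are well defined by Minty's theorem, proved from a finite
   variational inequality and compactness. *)

From HB Require Import structures.
From mathcomp Require Import all_boot all_order all_algebra.
From mathcomp Require Import classical_sets boolp reals topology normedtype derive finmap.
From mathcomp Require Import ring lra.
Set Implicit Arguments. Unset Strict Implicit. Unset Printing Implicit Defensive.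
Import Order.TTheory GRing.Theory Num.Theory.
Import numFieldNormedType.Exports.
Local Open Scope ring_scope.
Local Open Scope classical_set_scope.

Section Euclidean.
Variables (R : realType) (n : nat).
Local Notation V := 'rV[R]_n.
Implicit Types u v w : V.

Lemma dotC u v : dot u v = dot v u.
Proof. by rewrite /dot; apply: eq_bigr => i _; rewrite mulrC. Qed.

Lemma dotDl u v w : dot (u + v) w = dot u w + dot v w.
Proof. by rewrite /dot -big_split /=; apply: eq_bigr => i _; rewrite !mxE mulrDl. Qed.

Lemma dotDr u v w : dot w (u + v) = dot w u + dot w v.
Proof. by rewrite dotC dotDl !(dotC w). Qed.

Lemma dotZl (c : R) u v : dot (c *: u) v = c * dot u v.
Proof. by rewrite /dot mulr_sumr; apply: eq_bigr => i _; rewrite !mxE mulrA. Qed.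

Lemma dotZr (c : R) u v : dot v (c *: u) = c * dot v u.
Proof. by rewrite dotC dotZl dotC. Qed.

Lemma dotNl u v : dot (- u) v = - dot u v.
Proof. by rewrite -scaleN1r dotZl mulN1r. Qed.

Lemma dotNr u v : dot v (- u) = - dot v u.
Proof. by rewrite dotC dotNl dotC. Qed.

Lemma dotBl u v w : dot (u - v) w = dot u w - dot v w.
Proof. by rewrite dotDl dotNl. Qed.

Lemma dotBr u v w : dot w (u - v) = dot w u - dot w v.
Proof. by rewrite dotDr dotNr. Qed.

Lemma dot0l u : dot 0 u = 0.
Proof. by rewrite /dot big1 // => i _; rewrite mxE mul0r. Qed.

Lemma dot0r u : dot u 0 = 0.
Proof. by rewrite dotC dot0l. Qed.

Lemma dot_suml (I : Type) (s : seq I) (F : I -> V) v :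
  dot (\sum_(i <- s) F i) v = \sum_(i <- s) dot (F i) v.
Proof. by rewrite (big_morph (fun u => dot u v) (fun a b => dotDl a b v) (dot0l v)). Qed.

Lemma dot_sumr (I : Type) (s : seq I) (F : I -> V) v :
  dot v (\sum_(i <- s) F i) = \sum_(i <- s) dot v (F i).
Proof. by rewrite dotC dot_suml; apply: eq_bigr => i _; rewrite dotC. Qed.

Lemma dot_ge0 u : 0 <= dot u u.
Proof. by rewrite /dot sumr_ge0 // => i _; rewrite -expr2 sqr_ge0. Qed.

Lemma dot_eq0 u : dot u u = 0 -> u = 0.
Proof.
move=> /eqP; rewrite /dot psumr_eq0; last by move=> i _; rewrite -expr2 sqr_ge0.
move=> /allP u0; apply/rowP => i; rewrite mxE.
by have := u0 i (mem_index_enum i); rewrite /= -expr2 sqrf_eq0 => /eqP.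
Qed.

Lemma enorm_ge0 u : 0 <= enorm u.
Proof. exact: sqrtr_ge0. Qed.

Lemma enorm_sqr u : enorm u ^+ 2 = dot u u.
Proof. by rewrite /enorm sqr_sqrtr // dot_ge0. Qed.

Lemma enorm0 : enorm (0 : V) = 0.
Proof. by rewrite /enorm dot0l sqrtr0. Qed.

Lemma enorm_eq0 u : enorm u = 0 -> u = 0.
Proof. by move=> u0; apply: dot_eq0; rewrite -enorm_sqr u0 expr0n. Qed.

Lemma enormN u : enorm (- u) = enorm u.
Proof. by rewrite /enorm dotNl dotNr opprK. Qed.

Lemma enormZ (c : R) u : enorm (c *: u) = `|c| * enorm u.
Proof. by rewrite /enorm dotZl dotZr mulrA -expr2 sqrtrM ?sqr_ge0 // sqrtr_sqr. Qed.

Lemma enorm_le u (c : R) : 0 <= c -> dot u u <= c ^+ 2 -> enorm u <= c.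
Proof.
move=> c0 uc; rewrite /enorm -[c in _ <= c]ger0_norm // -sqrtr_sqr.
by rewrite ler_sqrt // sqr_ge0.
Qed.

Lemma dot_le_enorm u v : dot u v <= enorm u * enorm v.
Proof.
have [->|u0] := eqVneq u 0; first by rewrite dot0l enorm0 mul0r.
have [->|v0] := eqVneq v 0; first by rewrite dot0r enorm0 mulr0.
have nu : 0 < enorm u by rewrite lt0r enorm_ge0 (contra_neq (@enorm_eq0 u) u0).
have nv : 0 < enorm v by rewrite lt0r enorm_ge0 (contra_neq (@enorm_eq0 v) v0).
have := dot_ge0 (enorm v *: u - enorm u *: v).
rewrite !dotBl !dotBr !dotZl !dotZr -!enorm_sqr (dotC v u).
set a := enorm u; set b := enorm v; set d := dot u v => h.
have ab : 0 < a * b by rewrite mulr_gt0.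
suff : (a * b) * d <= (a * b) * (a * b) by rewrite ler_pM2l.
nra.
Qed.

Lemma enormD_le u v : enorm (u + v) <= enorm u + enorm v.
Proof.
apply: enorm_le; first by rewrite addr_ge0 // enorm_ge0.
rewrite dotDl !dotDr -!enorm_sqr (dotC v u).
have := dot_le_enorm u v; nra.
Qed.

End Euclidean.

Section Continuity.
Variables (R : realType) (n : nat).
Local Notation V := 'rV[R]_n.

Lemma continuous_sum (W : normedModType R) (T : topologicalType) (I : Type)
    (s : seq I) (F : I -> T -> W) :
  (forall i, continuous (F i)) -> continuous (fun x => \sum_(i <- s) F i x).
Proof.
move=> cF; elim: s => [|i s IHs].
  rewrite (_ : (fun x => _) = fun=> 0); first exact: cst_continuous.
  by apply: funext => x; rewrite big_nil.
rewrite (_ : (fun x => _) = fun x => F i x + \sum_(j <- s) F j x).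
  by move=> x; exact: continuousD (cF i x) (IHs x).
by apply: funext => x; rewrite big_cons.
Qed.

Lemma continuous_dot (T : topologicalType) (f g : T -> V) :
  continuous f -> continuous g -> continuous (fun x => dot (f x) (g x)).
Proof.
move=> cf cg; apply: (continuous_sum (W := R^o)) => i x.
have coord (h : T -> V) : continuous h -> continuous (fun x => h x ord0 i).
  by move=> ch y; exact: (continuous_comp (ch y) (@coord_continuous R 1 n ord0 i (h y))).
exact: continuousM (coord _ cf x) (coord _ cg x).
Qed.

Lemma continuous_dot_affine (a b : V) (c d : R) :
  continuous (fun x : V => dot (a + c *: x) (b + d *: x)).
Proof.
have affine (e : V) (k : R) : continuous (fun x : V => e + k *: x).
  by move=> x; apply: continuousD; [exact: cst_continuous | exact: continuousZl_tmp].
exact: continuous_dot.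
Qed.

Lemma closed_ge_continuous (f : V -> R) (r : R) :
  continuous f -> closed [set x | r <= f x].
Proof.
move=> cf; rewrite (_ : [set x | r <= f x] = f @^-1` [set s | r <= s]) //.
by apply: preimage_closed => [x _|]; [exact: cf | exact: closed_ge].
Qed.

Lemma bounded_set_enorm (S : set V) (c : R) :
  (forall x, S x -> enorm x <= c) -> bounded_set S.
Proof.
move=> Sc; exists c; split; first by rewrite num_real.
move=> M cM x Sx /=; apply: le_trans (ltW (le_lt_trans (Sc x Sx) cM)).
rewrite [X in X <= _]/Num.norm /= mx_normrE; apply: bigmax_le; first exact: enorm_ge0.
move=> [i j] _ /=; rewrite (ord1 i) -sqrtr_sqr /enorm ler_sqrt ?dot_ge0 //.
rewrite /dot (bigD1 j) //= -expr2 lerDl.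
by apply: sumr_ge0 => k _; rewrite -expr2 sqr_ge0.
Qed.

End Continuity.

Lemma le0_of_le_quadratic (R : realFieldType) (D N : R) : 0 <= N ->
  (forall t, 0 < t -> t <= 1 -> t * D <= t ^+ 2 * N) -> D <= 0.
Proof.
move=> N0 DN; rewrite leNgt; apply/negP => D0.
have DN1 : 0 < D + N + 1 by lra.
pose t := D / (D + N + 1).
have t0 : 0 < t by rewrite divr_gt0.
have t1 : t <= 1 by rewrite ler_pdivrMr // mul1r; lra.
have tDN : t * D + t * N + t = D by rewrite /t; field; rewrite gt_eqF.
have tD : 0 < t * D by rewrite mulr_gt0.
have := DN t t0 t1; rewrite expr2 -mulrA ler_pM2l //.
lra.
Qed.

Section FiniteVariationalInequality.
Variables (R : realType) (n k : nat) (y a : 'I_k -> 'rV[R]_n).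
Local Notation V := 'rV[R]_n.
Local Notation L := 'rV[R]_k.

Definition combv (w : 'I_k -> V) (l : L) : V := \sum_i l ord0 i *: w i.
Definition combr (p : 'I_k -> R) (l : L) : R := \sum_i l ord0 i * p i.
Definition simplex := [set l : L | (forall i, 0 <= l ord0 i) /\ \sum_i l ord0 i = 1].
Definition vertex (j : 'I_k) : L := \row_i (i == j)%:R.

(* A maximiser l of [vi_potential] on the simplex gives the solution vi_center l / 2
   (first-order optimality towards each vertex), while monotonicity of the pairs
   (y i, a i) makes [vi_potential] nonpositive on the simplex. *)
Definition vi_center (l : L) : V := combv (fun i => y i - a i) l.
Definition vi_potential (l : L) : R :=
  - dot (vi_center l) (vi_center l) / 4%:R - combr (fun i => dot (a i) (y i)) l.

Lemma combv_convex w (t : R) (l m : L) :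
  combv w ((1 - t) *: l + t *: m) = (1 - t) *: combv w l + t *: combv w m.
Proof.
rewrite /combv !scaler_sumr -big_split; apply: eq_bigr => i _.
by rewrite !mxE [in LHS]scalerDl !scalerA.
Qed.

Lemma combr_convex p (t : R) (l m : L) :
  combr p ((1 - t) *: l + t *: m) = (1 - t) * combr p l + t * combr p m.
Proof.
rewrite /combr !mulr_sumr -big_split; apply: eq_bigr => i _.
by rewrite !mxE mulrDl !mulrA.
Qed.

Lemma combv_vertex w j : combv w (vertex j) = w j.
Proof.
rewrite /combv (bigD1 j) //= big1 ?addr0; first by rewrite mxE eqxx scale1r.
by move=> i /negPf ij; rewrite mxE ij scale0r.
Qed.

Lemma combr_vertex p j : combr p (vertex j) = p j.
Proof.
rewrite /combr (bigD1 j) //= big1 ?addr0; first by rewrite mxE eqxx mul1r.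
by move=> i /negPf ij; rewrite mxE ij mul0r.
Qed.

Lemma dot_combv w1 w2 (l : L) :
  dot (combv w1 l) (combv w2 l) = \sum_i \sum_j l ord0 i * l ord0 j * dot (w1 i) (w2 j).
Proof.
rewrite /combv dot_suml; apply: eq_bigr => i _; rewrite dotZl dot_sumr mulr_sumr.
by apply: eq_bigr => j _; rewrite dotZr mulrA [_ * l ord0 j]mulrC -mulrA.
Qed.

Lemma simplex_convex (t : R) (l m : L) : 0 <= t <= 1 -> simplex l -> simplex m ->
  simplex ((1 - t) *: l + t *: m).
Proof.
move=> /andP[t0 t1] [l0 l1] [m0 m1]; split.
  by move=> i; rewrite !mxE addr_ge0 // mulr_ge0 // subr_ge0.
have sum1 (r : L) : \sum_i r ord0 i = combr (fun=> 1) r.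
  by apply: eq_bigr => i _; rewrite mulr1.
by rewrite sum1 combr_convex -!sum1 l1 m1 !mulr1 subrK.
Qed.

Lemma simplex_vertex j : simplex (vertex j).
Proof.
split; first by move=> i; rewrite mxE; case: (i == j).
by rewrite (bigD1 j) //= big1 ?addr0 => [|i /negPf ij]; rewrite mxE ?eqxx ?ij.
Qed.

Lemma simplex_compact : compact simplex.
Proof.
apply: bounded_closed_compact.
  apply: (@bounded_set_enorm _ _ _ 1) => l [l0 l1].
  apply: enorm_le => //; rewrite expr1n -l1 /dot; apply: ler_sum => i _.
  rewrite -expr2 -[X in _ <= X]mulr1 expr2 ler_wpM2l // -l1 (bigD1 i) //=.
  by rewrite lerDl sumr_ge0.
have coord i : continuous (fun l : L => l ord0 i) := @coord_continuous R 1 k ord0 i.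
have -> : simplex = (\bigcap_(i in [set: 'I_k]) [set l : L | 0 <= l ord0 i]) `&`
    ((fun l : L => \sum_i l ord0 i) @^-1` [set s | s = 1]).
  by apply/seteqP; split => [l [l0 l1]|l [/= l0 l1]]; split => // i; [move=> _|]; exact: l0.
apply: closedI; first by apply: closed_bigI => i _; exact: closed_ge_continuous.
apply: preimage_closed => [l _|]; last exact: closed_eq.
exact: (continuous_sum (W := R^o)).
Qed.

Lemma vi_potential_continuous : continuous vi_potential.
Proof.
have cc : continuous vi_center.
  apply: continuous_sum => i l.
  exact: continuousZr_tmp (@coord_continuous R 1 k ord0 i l).
have cP : continuous (combr (fun i => dot (a i) (y i))).
  apply: (continuous_sum (W := R^o)) => i l.
  exact: continuousM (@coord_continuous R 1 k ord0 i l) (@cst_continuous _ R^o _ l).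
have cd : continuous (fun l => dot (vi_center l) (vi_center l)) by exact: continuous_dot.
move=> l; have quad := continuousN (cd l).
exact: continuousB (continuousM quad (@cst_continuous _ R^o 4%:R^-1 l)) (cP l).
Qed.

Lemma sum_monotone_gap (l : L) : simplex l ->
  \sum_i \sum_j l ord0 i * l ord0 j * dot (a i - a j) (y i - y j) =
  2%:R * combr (fun i => dot (a i) (y i)) l - 2%:R * dot (combv a l) (combv y l).
Proof.
move=> [_ l1].
have expand i j : l ord0 i * l ord0 j * dot (a i - a j) (y i - y j) =
    l ord0 i * l ord0 j * dot (a i) (y i) - l ord0 i * l ord0 j * dot (a i) (y j)
    - l ord0 i * l ord0 j * dot (a j) (y i) + l ord0 i * l ord0 j * dot (a j) (y j).
  by rewrite !dotBl !dotBr; ring.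
under eq_bigr => i _ do under eq_bigr => j _ do rewrite expand.
under eq_bigr => i _ do rewrite big_split /= !sumrB.
rewrite big_split /= !sumrB.
have diag1 : \sum_i \sum_j l ord0 i * l ord0 j * dot (a i) (y i) =
    combr (fun i => dot (a i) (y i)) l.
  by apply: eq_bigr => i _; rewrite -mulr_suml -mulr_sumr l1 mulr1.
have diag2 : \sum_i \sum_j l ord0 i * l ord0 j * dot (a j) (y j) =
    combr (fun i => dot (a i) (y i)) l.
  by rewrite exchange_big; apply: eq_bigr => j _; rewrite -!mulr_suml l1 mul1r.
have cross : \sum_i \sum_j l ord0 i * l ord0 j * dot (a j) (y i) =
    dot (combv a l) (combv y l).
  rewrite dot_combv exchange_big; apply: eq_bigr => i _; apply: eq_bigr => j _.
  by rewrite [l ord0 i * _]mulrC.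
rewrite diag1 diag2 cross -dot_combv; ring.
Qed.

Lemma vi_potential_le0 (l : L) : (forall i j, 0 <= dot (a i - a j) (y i - y j)) ->
  simplex l -> vi_potential l <= 0.
Proof.
move=> mono Sl.
have gap_ge0 : 0 <= \sum_i \sum_j l ord0 i * l ord0 j * dot (a i - a j) (y i - y j).
  apply: sumr_ge0 => i _; apply: sumr_ge0 => j _.
  by rewrite mulr_ge0 // mulr_ge0 //; case: Sl.
rewrite sum_monotone_gap // in gap_ge0.
rewrite /vi_potential; have -> : vi_center l = combv y l - combv a l.
  by rewrite /vi_center /combv -sumrB; apply: eq_bigr => i _; rewrite scalerBr.
rewrite !dotBl !dotBr (dotC (combv y l)).
have := dot_ge0 (combv y l + combv a l); rewrite !dotDl !dotDr (dotC (combv y l)).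
lra.
Qed.

Lemma vi_potential_toward_vertex (l : L) j (t : R) :
  vi_potential ((1 - t) *: l + t *: vertex j) = vi_potential l
  - t * (dot (vi_center l) (y j - a j - vi_center l) / 2%:R + dot (a j) (y j)
         - combr (fun i => dot (a i) (y i)) l)
  - t ^+ 2 * (dot (y j - a j - vi_center l) (y j - a j - vi_center l) / 4%:R).
Proof.
rewrite /vi_potential [vi_center (_ + _)]/vi_center combv_convex combr_convex.
rewrite combv_vertex combr_vertex -/(vi_center l) /=.
move: (vi_center l) (y j - a j) => c e.
rewrite !(dotDl, dotDr, dotZl, dotZr, dotBl, dotBr, dotNl, dotNr) (dotC e c); by field.
Qed.

Lemma vi_potential_max_solution (l : L) : simplex l ->
  (forall m, simplex m -> vi_potential m <= vi_potential l) ->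
  forall j, dot (2%:R^-1 *: vi_center l + a j) (2%:R^-1 *: vi_center l - y j)
              <= vi_potential l.
Proof.
move=> Sl lmax j; have toward := vi_potential_toward_vertex l j.
move: toward; set c := vi_center l; set P := combr _ l; set e := y j - a j => toward.
have first_order : - (dot c (e - c) / 2%:R + dot (a j) (y j) - P) <= 0.
  apply: (@le0_of_le_quadratic _ _ (dot (e - c) (e - c) / 4%:R)).
    by rewrite divr_ge0 ?dot_ge0.
  move=> t t0 t1; rewrite mulrN.
  have t01 : 0 <= t <= 1 by rewrite ltW.
  have := lmax _ (simplex_convex t01 Sl (simplex_vertex j)).
  rewrite (toward t); lra.
move: first_order; rewrite /vi_potential -/c -/P /e.
rewrite !(dotDl, dotDr, dotZl, dotZr, dotBl, dotBr, dotNl, dotNr) (dotC (a j) c); lra.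
Qed.

Lemma finite_variational_inequality :
  (forall i j, 0 <= dot (a i - a j) (y i - y j)) ->
  exists x, forall j, dot (x + a j) (x - y j) <= 0.
Proof.
move=> mono; have [k0|k_gt0] := posnP k.
  by exists 0 => j; have := ltn_ord j; rewrite {2}k0.
have simplex_ne : simplex !=set0 by exists (vertex (Ordinal k_gt0)); exact: simplex_vertex.
have [l Sl lmax] := EVT_max_rV simplex_ne simplex_compact
  (continuous_subspaceT vi_potential_continuous).
rewrite in_setE in Sl.
exists (2%:R^-1 *: vi_center l) => j; apply: le_trans (vi_potential_le0 mono Sl).
by apply: vi_potential_max_solution => // m Sm; apply: lmax; rewrite in_setE.
Qed.

End FiniteVariationalInequality.

Section Minty.
Variables (R : realType) (n : nat).
Local Notation V := 'rV[R]_n.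
Implicit Types M : setop R n.

Lemma maximally_monotone_graph_ne M : maximally_monotone M -> exists x u, M x u.
Proof.
move=> [_ Mmax]; apply: contrapT => M0.
pose M' : setop R n := fun x u => x = 0 /\ u = 0.
have M'mono : monotone M' by move=> x y u v [-> ->] [-> ->]; rewrite subrr dot0l.
have M'sub x u : M x u -> M' x u by move=> Mxu; case: M0; exists x, u.
by apply: M0; exists 0, 0; exact: Mmax M' M'mono M'sub 0 0 (conj erefl erefl).
Qed.

Lemma maximally_monotone_ext M x u : maximally_monotone M ->
  (forall y v, M y v -> 0 <= dot (u - v) (x - y)) -> M x u.
Proof.
move=> [Mmono Mmax] xu; pose M' : setop R n := fun p w => M p w \/ (p = x /\ w = u).
have M'mono : monotone M'.
  move=> p q w1 w2 [Mpw1|[-> ->]] [Mqw2|[-> ->]].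
  - exact: Mmono.
  - by rewrite -[w1 - u]opprB -[p - x]opprB dotNl dotNr opprK; exact: xu.
  - exact: xu.
  - by rewrite subrr dot0l.
by apply: (Mmax M' M'mono) => [p w|]; [left | right].
Qed.

Lemma closed_minty_set (c : R) (z y v : V) :
  closed [set x : V | 0 <= dot (z - c *: x - v) (x - y)].
Proof.
rewrite (_ : [set x | _] = [set x | 0 <= dot ((z - v) + (- c) *: x) (- y + 1 *: x)]).
  exact/closed_ge_continuous/continuous_dot_affine.
by apply: funext => x /=; rewrite scaleNr scale1r addrAC (addrC (- y)).
Qed.

Lemma bounded_minty_set (c : R) (z y v : V) : 0 < c ->
  bounded_set [set x : V | 0 <= dot (z - c *: x - v) (x - y)].
Proof.
move=> c0; rewrite (_ : [set x | _] = [set x | 0 <= dot (z - v - c *: x) (x - y)]).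
  2: by apply: funext => x /=; rewrite addrAC.
move: (z - v) => w; set al := enorm (w + c *: y); set b := enorm w * enorm y.
apply: (@bounded_set_enorm _ _ _ (1 + (al + b) / c)) => x /= xS.
have quad : c * enorm x ^+ 2 <= al * enorm x + b.
  have := dot_le_enorm x (w + c *: y); have := dot_le_enorm (- w) y.
  rewrite enormN enorm_sqr -/al -/b; move: xS.
  rewrite !(dotDl, dotDr, dotBl, dotBr, dotZl, dotZr, dotNl, dotNr) (dotC x w).
  lra.
have al0 : 0 <= al := enorm_ge0 _.
have b0 : 0 <= b by rewrite mulr_ge0 // enorm_ge0.
have x0 : 0 <= enorm x := enorm_ge0 _.
rewrite -(ler_pM2l c0) mulrDr mulr1 mulrCA mulfV ?gt_eqF // mulr1.
have [x1|x1] := leP (enorm x) 1; nra.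
Qed.

Lemma minty_finite M (c : R) (z : V) (s : seq (V * V)) : monotone M -> 0 < c ->
  (forall p, p \in s -> M p.1 p.2) ->
  exists x, forall p, p \in s -> 0 <= dot (z - c *: x - p.2) (x - p.1).
Proof.
move=> Mmono c0 sM.
pose y (i : 'I_(size s)) := (nth (0, 0) s i).1.
pose a (i : 'I_(size s)) := c^-1 *: ((nth (0, 0) s i).2 - z).
have [i j|x xs] := @finite_variational_inequality R n (size s) y a.
  rewrite /a -scalerBr dotZl mulr_ge0 ?invr_ge0 ?(ltW c0) // opprB addrA subrK.
  by apply: Mmono; apply: sM; apply: mem_nth.
exists x => p /(nthP (0, 0)) [i i_lt <-].
have := xs (Ordinal i_lt); rewrite /a /y /=.
rewrite (_ : z - c *: x - _ = - c *: (x + c^-1 *: ((nth (0, 0) s i).2 - z))).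
  by rewrite dotZl mulNr oppr_ge0 pmulr_rle0.
by apply/rowP => j; rewrite !mxE; field; rewrite gt_eqF.
Qed.

Theorem minty M (c : R) (z : V) : maximally_monotone M -> 0 < c ->
  exists p, M p (z - c *: p).
Proof.
move=> Mmax c0; have [y0 [v0 M0]] := maximally_monotone_graph_ne Mmax.
pose C (p : V * V) := [set x : V | 0 <= dot (z - c *: x - p.2) (x - p.1)].
have K_cpt : compact (C (y0, v0)).
  by apply: bounded_closed_compact; [exact: bounded_minty_set | exact: closed_minty_set].
rewrite compact_In0 in K_cpt.
have [|D sD|x Cx] := K_cpt _ [set p | M p.1 p.2] (fun p => C (y0, v0) `&` C p).
- by exists C => // p _; exact: closed_minty_set.
- have sM p : p \in (y0, v0) :: enum_fset D -> M p.1 p.2.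
    by rewrite inE => /orP[/eqP -> //|/sD]; rewrite in_setE.
  have [x xC] := minty_finite z Mmax.1 c0 sM.
  by exists x => p /= pD; split; apply: xC; rewrite inE ?eqxx // pD orbT.
exists x; apply: maximally_monotone_ext => // y v Myv.
by have [_] := Cx (y, v) Myv.
Qed.

Lemma closed_maximally_monotone_fiber M u : maximally_monotone M ->
  closed [set x | M x u].
Proof.
move=> Mmax; rewrite (_ : [set x | M x u] = \bigcap_(p in [set p | M p.1 p.2])
    [set x | 0 <= dot (u - 0 *: x - p.2) (x - p.1)]).
  by apply: closed_bigI => p _; exact: closed_minty_set.
apply/seteqP; split => [x Mxu [y v] /= Myv|x xM]; rewrite /= ?scale0r ?subr0.
  exact: Mmax.1.
by apply: maximally_monotone_ext => // y v Myv; have := xM (y, v) Myv; rewrite /= scale0r subr0.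
Qed.

End Minty.

Section Resolvent.
Variables (R : realType) (n : nat).
Local Notation V := 'rV[R]_n.
Implicit Types (M A B : setop R n) (w : V).

Lemma resolvent_spec M (gamma : R) w : maximally_monotone M -> 0 < gamma ->
  exists2 u, M (resolvent (scale_op gamma M) w) u &
             gamma *: u = w - resolvent (scale_op gamma M) w.
Proof.
move=> Mmax g0; have gV0 : 0 < gamma^-1 by rewrite invr_gt0.
have [p Mp] := minty (gamma^-1 *: w) Mmax gV0.
have : exists p, [set p | scale_op gamma M p (w - p)] p.
  exists p; exists (gamma^-1 *: w - gamma^-1 *: p) => //.
  by rewrite -scalerBr scalerA mulfV ?gt_eqF // scale1r.
by move=> /(xgetPex 0) [u Mu gu]; exists u.
Qed.

Lemma resolvent_eq M (gamma : R) w p u : monotone M -> 0 < gamma ->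
  M p u -> gamma *: u = w - p -> resolvent (scale_op gamma M) w = p.
Proof.
move=> Mmono g0 Mpu gu; apply: xget_unique; first by exists u.
move=> q [u' Mqu' gu'].
have qp : dot (q - p) (q - p) <= 0.
  have := Mmono _ _ _ _ Mqu' Mpu.
  have gdiff : gamma *: (u' - u) = p - q.
    by rewrite scalerBr gu' gu opprB addrC addrA subrK.
  have -> : u' - u = gamma^-1 *: (p - q) by rewrite -gdiff scalerA mulVf ?gt_eqF // scale1r.
  by rewrite -opprB dotZl dotNl mulrN oppr_ge0 pmulr_rle0 // invr_gt0.
by apply/eqP; rewrite -subr_eq0; apply/eqP/dot_eq0/le_anti; rewrite qp dot_ge0.
Qed.

(* Cocoercivity of B says exactly that B^-1 - beta I is monotone. *)
Definition shifted_inverse (beta : R) B : setop R n :=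
  fun u w => exists x, B x u /\ w = x - beta *: u.

Lemma maximally_monotone_shifted_inverse B (beta : R) :
  maximally_monotone B -> 0 < beta -> cocoercive beta B ->
  maximally_monotone (shifted_inverse beta B).
Proof.
move=> [Bmono Bmax] b0 Bcoco.
have shift (x1 x2 u1 u2 : V) : dot (u1 - u2) (x1 - beta *: u1 - (x2 - beta *: u2)) =
    dot (u1 - u2) (x1 - x2) - beta * dot (u1 - u2) (u1 - u2).
  by rewrite -dotZr -dotBr; congr dot; apply/rowP => i; rewrite !mxE; ring.
split=> [u1 u2 w1 w2 [x1 [Bx1 ->]] [x2 [Bx2 ->]]|N' N'mono N'ext u w N'uw].
  by rewrite dotC shift subr_ge0 -enorm_sqr; exact: Bcoco.
pose B' : setop R n := fun x u => N' u (x - beta *: u).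
have B'mono : monotone B'.
  move=> x1 x2 u1 u2 B'1 B'2; have := N'mono _ _ _ _ B'1 B'2.
  rewrite dotC shift subr_ge0 => le; apply: le_trans le.
  by rewrite mulr_ge0 ?dot_ge0 ?ltW.
have B'ext x u' : B x u' -> B' x u' by move=> Bxu; apply: N'ext; exists x.
exists (w + beta *: u); split; last by rewrite addrK.
by apply: (Bmax B' B'mono B'ext); rewrite /B' addrK.
Qed.

Lemma cocoercive_total B (beta : R) : maximally_monotone B -> 0 < beta ->
  cocoercive beta B -> forall x, exists u, B x u.
Proof.
move=> Bmax b0 Bcoco x.
have [u [y [Byu]]] := minty x (maximally_monotone_shifted_inverse Bmax b0 Bcoco) b0.
by move=> /(congr1 (fun t => t + beta *: u)); rewrite !subrK => ->; exists u.
Qed.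

Lemma solution_setE A B (beta : R) (x0 a0 b0 : V) : monotone A -> 0 < beta ->
  cocoercive beta B -> A x0 a0 -> B x0 b0 -> a0 + b0 = 0 ->
  solution_set A B = [set x | A x (- b0)] `&` [set x | B x b0].
Proof.
move=> Amono b0_gt0 Bcoco Ax0 Bx0 /eqP; rewrite addr_eq0 => /eqP a0E.
apply/seteqP; split => [x [a1 [b1 [Ax [Bx /eqP]]]]|x [Ax Bx]]; last first.
  by exists (- b0), b0; rewrite addNr.
rewrite addr_eq0 => /eqP a1E.
have := Amono _ _ _ _ Ax Ax0; rewrite a1E a0E opprK addrC -opprB dotNl oppr_ge0 => mono.
have := Bcoco _ _ _ _ Bx Bx0; rewrite enorm_sqr => coco.
have /dot_eq0/subr0_eq b1E : dot (b1 - b0) (b1 - b0) = 0.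
  by apply: le_anti; rewrite dot_ge0 andbT -(pmulr_rle0 _ b0_gt0); lra.
by split; rewrite /= -b1E // -a1E.
Qed.

Lemma closed_solution_set A B (beta : R) : maximally_monotone A -> maximally_monotone B ->
  0 < beta -> cocoercive beta B -> solution_set A B !=set0 -> closed (solution_set A B).
Proof.
move=> Amax Bmax b0 Bcoco [x0 [a0 [b0' [Ax0 [Bx0 ab0]]]]].
rewrite (solution_setE Amax.1 b0 Bcoco Ax0 Bx0 ab0).
by apply: closedI; exact: closed_maximally_monotone_fiber.
Qed.

Lemma is_proj_exists (S : set V) w : closed S -> S !=set0 -> exists p, is_proj S w p.
Proof.
move=> Sclosed [x0 Sx0]; set r := dot (w - x0) (w - x0).
have dist_cont : continuous (fun x : V => - dot (w - x) (w - x)).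
  rewrite (_ : (fun x => _) = fun x => dot (w + (-1) *: x) (- w + 1 *: x)).
    exact: continuous_dot_affine.
  by apply: funext => x; rewrite scaleN1r scale1r -dotNr opprD opprK addrC.
set K := S `&` [set x | - r <= - dot (w - x) (w - x)].
have K_cpt : compact K.
  apply: bounded_closed_compact.
    2: exact: closedI Sclosed (closed_ge_continuous (r := - r) dist_cont).
  apply: (@bounded_set_enorm _ _ _ (enorm w + enorm (w - x0))) => x [_ /= xK].
  have : enorm (w - x) <= enorm (w - x0).
    by apply: enorm_le; [exact: enorm_ge0 | rewrite enorm_sqr -/r; lra].
  by have := enormD_le w (- (w - x)); rewrite enormN opprB addrC subrK; lra.
have [|p + pmin] := EVT_max_rV _ K_cpt (continuous_subspaceT dist_cont).
  by exists x0; split => //=; rewrite lexx.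
rewrite in_setE => -[Sp pK]; exists p; split=> // q Sq; rewrite /enorm ler_sqrt ?dot_ge0 //.
have [qK|] := leP (- r) (- dot (w - q) (w - q)); last by move: pK => /=; lra.
by rewrite -lerN2; apply: pmin; rewrite in_setE.
Qed.

Lemma dist_le_enorm (S : set V) w z : S z -> dist S w <= enorm (w - z).
Proof.
move=> Sz; apply: ge_inf; last by exists z.
by exists 0 => _ [z' _ <-]; exact: enorm_ge0.
Qed.

Lemma restricted_strongly_monotone_le A B (mu mu' : R) : mu <= mu' ->
  restricted_strongly_monotone A B mu' -> restricted_strongly_monotone A B mu.
Proof.
move=> mu_le rsm x xs u v xs_proj Axu Bxv.
by apply: le_trans (rsm _ _ _ _ xs_proj Axu Bxv); rewrite ler_wpM2r ?sqr_ge0.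
Qed.

End Resolvent.

Section ResidualBound.
Variables (R : realType) (n : nat).
Local Notation V := 'rV[R]_n.

Lemma sos_coef_ge0 (rho m : R) : 0 < rho <= 1 -> 0 < m <= 1 ->
  0 <= 2%:R * ((1 + rho) * ((1 + rho) / m - rho)) / (m * rho) - rho ^+ 2
       - rho ^+ 3 / (rho + 2%:R) - ((1 + rho) / m - rho) ^+ 2.
Proof.
move=> /andP[r0 r1] /andP[m0 m1]; set t := m^-1.
have t1 : 1 <= t by rewrite /t invf_ge1.
set K := (1 + rho) * t - rho.
have K1 : 1 <= K by rewrite /K; nra.
have Kt : K <= (1 + rho) * t by rewrite /K; lra.
have -> : 2%:R * ((1 + rho) * K) / (m * rho) = 2%:R * (1 + rho) * K * t / rho.
  by rewrite /t; field; rewrite !gt_eqF.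
have -> : 2%:R * (1 + rho) * K * t / rho - rho ^+ 2 - rho ^+ 3 / (rho + 2%:R) - K ^+ 2 =
    (2%:R * (rho + 2%:R) * (1 + rho) * K * t - 2%:R * rho ^+ 3 * (rho + 1)
     - rho * (rho + 2%:R) * K ^+ 2) / (rho * (rho + 2%:R)).
  by field; rewrite !gt_eqF //; lra.
apply: divr_ge0; last by rewrite mulr_ge0 //; lra.
have r2 : 0 <= rho * (rho + 2%:R) by rewrite mulr_ge0 //; lra.
have KK : rho * (rho + 2%:R) * K ^+ 2 <= rho * (rho + 2%:R) * (1 + rho) * t * K.
  have KK : K * K <= ((1 + rho) * t) * K by rewrite ler_wpM2r //; lra.
  by have := ler_wpM2l r2 KK; rewrite expr2 !mulrA.
have tK : 1 <= t * K by rewrite -[1]mulr1 ler_pM //; lra.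
have r3 : rho ^+ 3 <= rho by rewrite -[X in _ <= X]expr1 ler_wiXn2l //; lra.
have r22 : 0 <= (rho + 2%:R) * (2%:R - rho) by rewrite mulr_ge0 //; lra.
have := ler_wpM2r r22 tK; rewrite mul1r => tK2.
have r1' : rho ^+ 2 <= 1 by rewrite expr2; nra.
nra.
Qed.

(* The gap is a nonnegative combination of the three hypotheses, of |w1|^2, |w2|^2
   and of |g|^2, the last coefficient being nonnegative by [sos_coef_ge0]. *)
Lemma normalized_residual_bound (u E v g : V) (rho m : R) :
  0 < rho <= 1 -> 0 < m <= 1 ->
  m * dot u u <= dot (E - g) u -> dot v v <= dot v u -> dot g g <= rho * dot g E ->
  dot (u + rho *: (v + g)) (u + rho *: (v + g)) <= ((1 + rho) / m) ^+ 2 * dot E E.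
Proof.
move=> rho01 m01 uE vu gE.
set K := (1 + rho) / m - rho; set ka := (1 + rho) * K.
set coef := 2%:R * ka / (m * rho) - rho ^+ 2 - rho ^+ 3 / (rho + 2%:R) - K ^+ 2.
have coef_ge0 : 0 <= coef := sos_coef_ge0 rho01 m01.
case/andP: rho01 => r0 r1; case/andP: m01 => m0 m1.
set w1 := v - u - (rho / (rho + 2%:R)) *: g.
set w2 := (1 + rho) *: u - ((1 + rho) / m) *: E + (ka / (1 + rho)) *: g.
have sos : ((1 + rho) / m) ^+ 2 * dot E E - dot (u + rho *: (v + g)) (u + rho *: (v + g)) =
    2%:R * (1 + rho) ^+ 2 / m * (dot (E - g) u - m * dot u u)
    + 2%:R * rho * (1 + rho) * (dot v u - dot v v)
    + 2%:R * ka / (m * rho) * (rho * dot g E - dot g g)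
    + rho * (rho + 2%:R) * dot w1 w1 + dot w2 w2 + coef * dot g g.
  rewrite /w1 /w2 /coef /ka /K !(dotDl, dotDr, dotZl, dotZr, dotBl, dotBr, dotNl, dotNr).
  rewrite ?(dotC E u) ?(dotC v u) ?(dotC g u) ?(dotC v E) ?(dotC g E) ?(dotC g v).
  by field; rewrite !gt_eqF //; lra.
have K0 : 0 <= K by rewrite subr_ge0 ler_pdivlMr //; nra.
rewrite -subr_ge0 sos; repeat apply: addr_ge0.
all: rewrite ?dot_ge0 // mulr_ge0 ?dot_ge0 ?subr_ge0 // ?divr_ge0 ?mulr_ge0 ?sqr_ge0 //.
all: rewrite /coef in coef_ge0; lra.
Qed.

Lemma residual_bound (u E v g : V) (beta gam mu : R) :
  0 < beta -> 0 < gam <= beta -> 0 < mu -> mu * beta <= 1 ->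
  mu * dot u u <= dot (E - g) u -> beta * dot v v <= dot v u ->
  beta * dot g g <= gam * dot g E ->
  enorm (u + gam *: (v + g)) <= (gam + beta) / (mu * beta) * enorm E.
Proof.
move=> b0 /andP[g0 gb] mu0 mub uE vu gE.
have rho01 : 0 < gam / beta <= 1 by rewrite divr_gt0 //= ler_pdivrMr // mul1r.
have m01 : 0 < mu * beta <= 1 by rewrite mulr_gt0.
have uE' : mu * beta * dot u u <= dot (beta *: E - beta *: g) u.
  by rewrite -scalerBr dotZl mulrAC mulrC ler_pM2l.
have vu' : dot (beta *: v) (beta *: v) <= dot (beta *: v) u.
  by rewrite !dotZl dotZr ler_pM2l.
have gE' : dot (beta *: g) (beta *: g) <= gam / beta * dot (beta *: g) (beta *: E).
  rewrite !dotZl !dotZr [X in _ <= X](_ : _ = beta * (gam * dot g E)).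
    by rewrite ler_pM2l.
  by field; rewrite gt_eqF.
have := normalized_residual_bound rho01 m01 uE' vu' gE'.
rewrite -scalerDr scalerA mulfVK ?gt_eqF // => bound.
apply: enorm_le; first by rewrite mulr_ge0 ?enorm_ge0 ?divr_ge0 ?mulr_ge0 //; lra.
apply: le_trans bound _; rewrite [X in _ <= X]exprMn enorm_sqr !dotZl !dotZr.
by rewrite le_eqVlt; apply/orP; left; apply/eqP; field; rewrite !gt_eqF ?mulr_gt0.
Qed.

End ResidualBound.

Section DouglasRachford.
Variables (R : realType) (n : nat) (A B : setop R n) (gamma lambda : R).
Local Notation V := 'rV[R]_n.
Local Notation T := (DR_op A B gamma lambda).

Lemma DR_residual (w : V) :
  w - T w = lambda *: (resolvent (scale_op gamma B) w
                       - resolvent (scale_op gamma A) (reflected (scale_op gamma B) w)).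
Proof. by rewrite /DR_op /reflected; apply/rowP => i; rewrite !mxE; field. Qed.

Lemma DR_fixed_of_solution (x a b : V) : monotone A -> monotone B -> 0 < gamma ->
  A x a -> B x b -> a + b = 0 -> fixed_points T (x + gamma *: b).
Proof.
move=> Amono Bmono g0 Axa Bxb /eqP; rewrite addr_eq0 => /eqP aE.
have JB : resolvent (scale_op gamma B) (x + gamma *: b) = x.
  by apply: (resolvent_eq Bmono g0 Bxb); rewrite addrC addKr.
have JA : resolvent (scale_op gamma A) (x - gamma *: b) = x.
  by apply: (resolvent_eq Amono g0 Axa); rewrite aE scalerN addrC addKr.
rewrite /fixed_points /= /DR_op /reflected JB.
have -> : 2%:R *: x - (x + gamma *: b) = x - gamma *: b.
  by apply/rowP => i; rewrite !mxE; ring.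
by rewrite JA; apply/rowP => i; rewrite !mxE; field.
Qed.

Lemma DR_near_fixed_point (beta mu : R) (w : V) :
  maximally_monotone A -> maximally_monotone B -> 0 < beta -> cocoercive beta B ->
  solution_set A B !=set0 -> 0 < mu -> mu * beta <= 1 ->
  restricted_strongly_monotone A B mu -> 0 < lambda -> 0 < gamma <= beta ->
  exists2 ws, fixed_points T ws & enorm (w - ws) <=
    (gamma + gamma * (mu * beta) + beta) / (lambda * gamma * (mu * beta)) * enorm (w - T w).
Proof.
move=> Amax Bmax b0 Bcoco X0 mu0 mub Arsm l0 /andP[g0 gb].
have [b Bb gb_eq] := resolvent_spec w Bmax g0.
have [a Aa ga_eq] := resolvent_spec (reflected (scale_op gamma B) w) Amax g0.
set xB := resolvent _ w in Bb gb_eq *; set xA := resolvent _ _ in Aa ga_eq *.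
have [b' Bb'] := cocoercive_total Bmax b0 Bcoco xA.
have [xs [Xxs xs_proj]] := is_proj_exists xA (closed_solution_set Amax Bmax b0 Bcoco X0) X0.
have [a1 [b1 [Aa1 [Bb1 ab1]]]] := Xxs.
exists (xs + gamma *: b1); first exact: DR_fixed_of_solution Amax.1 Bmax.1 g0 Aa1 Bb1 ab1.
have gab : xB - xA = gamma *: (a + b).
  by rewrite scalerDr ga_eq gb_eq /reflected -/xB; apply/rowP => i; rewrite !mxE; ring.
have wE : w - (xs + gamma *: b1) =
    gamma *: (a + b) + ((xA - xs) + gamma *: ((b' - b1) + (b - b'))).
  rewrite -gab; apply/rowP => i; move/rowP/(_ i): gb_eq; rewrite !mxE => gbi.
  by rewrite -[w ord0 i](subrK (xB ord0 i)) -gbi; ring.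
have := @residual_bound _ _ (xA - xs) (a + b) (b' - b1) (b - b') beta gamma mu.
rewrite (_ : a + b - (b - b') = a + b'); last by apply/rowP => i; rewrite !mxE; ring.
have coB' := Bcoco _ _ _ _ Bb' Bb1; have coB := Bcoco _ _ _ _ Bb Bb'.
have rsm := Arsm _ _ _ _ (conj Xxs xs_proj) Aa Bb'.
rewrite -!enorm_sqr gab dotZr in coB *.
move=> /(_ b0 _ mu0 mub rsm coB' coB); rewrite g0 gb => /(_ isT) bound.
rewrite DR_residual -/xB -/xA gab wE !enormZ !ger0_norm ?(ltW l0) ?(ltW g0) //.
apply: le_trans (enormD_le _ _) _; rewrite enormZ ger0_norm ?(ltW g0) //.
apply: le_trans (lerD (lexx _) bound) _; rewrite le_eqVlt; apply/orP; left.
by apply/eqP; field; rewrite !gt_eqF ?mulr_gt0.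
Qed.

End DouglasRachford.

Theorem proposition2 (R : realType) (n : nat) (A B : setop R n)
    (beta mu_f lambda gamma : R) (w1 : 'rV[R]_n) :
  maximally_monotone A -> maximally_monotone B ->
  0 < beta -> cocoercive beta B ->
  solution_set A B !=set0 ->
  0 < mu_f -> restricted_strongly_monotone A B mu_f ->
  0 < lambda < 2%:R -> 0 < gamma <= beta ->
  fixed_points (DR_op A B gamma lambda) !=set0 ->
  error_bound (DR_op A B gamma lambda)
    [set w | dist (fixed_points (DR_op A B gamma lambda)) w
             <= dist (fixed_points (DR_op A B gamma lambda)) w1]
    ((gamma + gamma * Num.min (mu_f * beta) 1 + beta)
       / (lambda * gamma * Num.min (mu_f * beta) 1)).
Proof.
move=> Amax Bmax b0 Bcoco X0 muf0 rsm /andP[l0 _] gb _ w _.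
set m := Num.min (mu_f * beta) 1.
have m0 : 0 < m by rewrite lt_min ltr01 andbT mulr_gt0.
have mbb : m / beta * beta = m by rewrite mulfVK ?gt_eqF.
have mb0 : 0 < m / beta by rewrite divr_gt0.
have mb1 : m / beta * beta <= 1 by rewrite mbb ge_min lexx orbT.
have mb_le : m / beta <= mu_f by rewrite ler_pdivrMr // ge_min lexx.
have [ws Tws] := DR_near_fixed_point w Amax Bmax b0 Bcoco X0 mb0 mb1
  (restricted_strongly_monotone_le mb_le rsm) l0 gb.
by rewrite mbb; apply: le_trans; exact: dist_le_enorm.
Qed.
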